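(* Let $L>0$, $H\in(0,\infty]$, $D\ge1$, and let $v_1,\dots,v_{D+1}\in\mathbb R^m$ be orthonormal. With $\ell=\min\{L,\ H/(10(D+1)^{1.5})\}$, $\eta=10(D+1)^{1.5}\ell$, $\tilde f(x)=\max_{1\le r\le D+1}(\ell v_r^\top x-5\ell^2(r-1)/\eta)$ and $f(x)=\inf_y\{\tilde f(y)+\frac\eta2\|y-x\|^2\}$, every $x\in\mathbb R^m$ with $|v_{D+1}^\top x|\le\ell/\eta$ satisfies \[f(x)-\min_{\|x'\|\le1}f(x')\ \ge\ \min\Big\{\frac{L}{2\sqrt{D+1}},\ \frac{H}{20(D+1)^2}\Big\}.\] *)

From Stdlib Require Import Reals Lra ClassicalEpsilon.
Open Scope R_scope.

(* Vectors of R^m are represented as functions nat -> R; only the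
   coordinates 0..m-1 are ever used. *)
Fixpoint sumR (m : nat) (g : nat -> R) : R :=
  match m with
  | O => 0
  | S k => sumR k g + g k
  end.

Definition dot (m : nat) (a b : nat -> R) : R := sumR m (fun i => a i * b i).
Definition sqnorm (m : nat) (a : nat -> R) : R := dot m a a.
Definition norm (m : nat) (a : nat -> R) : R := sqrt (sqnorm m a).

Definition orthonormal (m D : nat) (v : nat -> nat -> R) : Prop :=
  forall r s, (1 <= r <= D + 1)%nat -> (1 <= s <= D + 1)%nat ->
    dot m (v r) (v s) = if Nat.eq_dec r s then 1 else 0.

Definition is_glb (E : R -> Prop) (a : R) : Prop :=
  (forall s, E s -> a <= s) /\ (forall b, (forall s, E s -> b <= s) -> b <= a).

(* The infimum (chosen classically; meaningful when the glb exists). *)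
Definition Rinf (E : R -> Prop) : R :=
  epsilon (inhabits 0) (fun a => is_glb E a).

(* Parameters. H = None encodes H = +infinity. *)
Definition pow15 (x : R) : R := Rpower x (3/2).

Definition ell (L : R) (H : option R) (D : nat) : R :=
  match H with
  | Some h => Rmin L (h / (10 * pow15 (INR (D + 1))))
  | None => L
  end.

Definition eta (L : R) (H : option R) (D : nat) : R :=
  10 * pow15 (INR (D + 1)) * ell L H D.

(* max over r = 1..D+1 of g r *)
Fixpoint maxR_from1 (n : nat) (g : nat -> R) : R :=
  match n with
  | O => g 1%nat
  | S k => Rmax (maxR_from1 k g) (g (S (S k)))
  end.

Definition ftilde (m D : nat) (L : R) (H : option R) (v : nat -> nat -> R)
  (x : nat -> R) : R :=
  let l := ell L H D in
  let e := eta L H D in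
  maxR_from1 D (fun r => l * dot m (v r) x - 5 * l ^ 2 * INR (r - 1) / e).

Definition fenv (m D : nat) (L : R) (H : option R) (v : nat -> nat -> R)
  (x : nat -> R) : R :=
  Rinf (fun t => exists y : nat -> R,
          t = ftilde m D L H v y
              + eta L H D / 2 * sqnorm m (fun i => y i - x i)).

Definition fmin_ball (m D : nat) (L : R) (H : option R) (v : nat -> nat -> R) : R :=
  Rinf (fun t => exists x' : nat -> R, norm m x' <= 1 /\ t = fenv m D L H v x').

Definition lower_bound (L : R) (H : option R) (D : nat) : R :=
  match H with
  | Some h => Rmin (L / (2 * sqrt (INR (D + 1)))) (h / (20 * INR (D + 1) ^ 2))
  | None => L / (2 * sqrt (INR (D + 1)))
  end.

(* The Moreau envelope f of the max-of-affine function is bounded below by the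
   envelope of its last piece l v_{D+1}.y - 5 l^2 D / eta, which is an explicit
   affine function of x with an O(l^2/eta) loss from completing the square; on
   the slab |v_{D+1}.x| <= l/eta this gives f(x) >= -(5D + 3/2) l^2/eta.  On the
   other hand the unit vector x0 = -(v_1 + ... + v_{D+1}) / sqrt(D+1) makes every
   piece at most -l/sqrt(D+1), and f(x0) <= ftilde(x0).  Since
   eta = 10 (D+1)^{3/2} l, the gap l/sqrt(D+1) = 10 (D+1) l^2/eta beats the loss
   by at least l/(2 sqrt(D+1)), which dominates the stated minimum. *)

From Stdlib Require Import Reals Lra Lia ClassicalEpsilon.
Open Scope R_scope.

Lemma sumR_ext m f g : (forall i, (i < m)%nat -> f i = g i) -> sumR m f = sumR m g.
Proof.
  intros Hfg; induction m as [|m IH]; simpl; [reflexivity|].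
  rewrite IH by (intros; apply Hfg; lia); rewrite Hfg by lia; reflexivity.
Qed.

Lemma sumR_plus m f g : sumR m (fun i => f i + g i) = sumR m f + sumR m g.
Proof. induction m as [|m IH]; simpl; [lra | rewrite IH; lra]. Qed.

Lemma sumR_scal m c f : sumR m (fun i => c * f i) = c * sumR m f.
Proof. induction m as [|m IH]; simpl; [lra | rewrite IH; lra]. Qed.

Lemma sumR_le m f g : (forall i, f i <= g i) -> sumR m f <= sumR m g.
Proof. intros Hfg; induction m as [|m IH]; simpl; [lra | specialize (Hfg m); lra]. Qed.

Lemma sumR_const1 n : sumR n (fun _ => 1) = INR n.
Proof. induction n as [|n IH]; simpl sumR; [simpl; lra | rewrite IH, S_INR; lra]. Qed.

Lemma sumR_swap m n F :
  sumR m (fun i => sumR n (fun k => F i k)) = sumR n (fun k => sumR m (fun i => F i k)).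
Proof.
  induction m as [|m IH]; simpl.
  - induction n; simpl; lra.
  - rewrite IH, <- sumR_plus; reflexivity.
Qed.

Lemma sumR_delta_gt n r : (n < r)%nat ->
  sumR n (fun k => if Nat.eq_dec r (S k) then 1 else 0) = 0.
Proof.
  induction n as [|n IH]; intros Hr; simpl; [lra|].
  rewrite IH by lia; destruct (Nat.eq_dec r (S n)); [lia | lra].
Qed.

Lemma sumR_delta n r : (1 <= r <= n)%nat ->
  sumR n (fun k => if Nat.eq_dec r (S k) then 1 else 0) = 1.
Proof.
  induction n as [|n IH]; intros Hr; [lia|]; simpl.
  destruct (Nat.eq_dec r (S n)).
  - rewrite sumR_delta_gt by lia; lra.
  - rewrite IH by lia; lra.
Qed.

Lemma dot_sym m a b : dot m a b = dot m b a.
Proof. apply sumR_ext; intros; ring. Qed.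

Lemma dot_sub m a y z : dot m a (fun i => y i - z i) = dot m a y - dot m a z.
Proof.
  unfold dot; rewrite (sumR_ext m _ (fun i => a i * y i + (-1) * (a i * z i))) by (intros; ring).
  rewrite sumR_plus, sumR_scal; ring.
Qed.

Lemma dot_scal m a c b : dot m a (fun i => c * b i) = c * dot m a b.
Proof.
  unfold dot; rewrite <- sumR_scal; apply sumR_ext; intros; ring.
Qed.

Lemma sqnorm_scal m c b : sqnorm m (fun i => c * b i) = c ^ 2 * sqnorm m b.
Proof.
  unfold sqnorm; rewrite dot_scal, dot_sym, dot_scal; ring.
Qed.

Lemma sqnorm_ge0 m a : 0 <= sqnorm m a.
Proof.
  unfold sqnorm, dot; induction m as [|m IH]; simpl; [lra|].
  pose proof (Rle_0_sqr (a m)); unfold Rsqr in *; lra.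
Qed.

Lemma norm_le_1 m a : sqnorm m a <= 1 -> norm m a <= 1.
Proof. intros Ha; rewrite <- sqrt_1; apply sqrt_le_1_alt, Ha. Qed.

Lemma sqnorm_le_1 m a : norm m a <= 1 -> sqnorm m a <= 1.
Proof.
  intros Ha; apply sqrt_le_0; [apply sqnorm_ge0 | lra | rewrite sqrt_1; exact Ha].
Qed.

Lemma dot_ge_neg_sqnorm m a b : dot m a b >= - (sqnorm m a + sqnorm m b) / 2.
Proof.
  unfold sqnorm, dot.
  assert (Hsum : sumR m (fun i => -(1/2) * (a i * a i) + -(1/2) * (b i * b i))
                 <= sumR m (fun i => a i * b i)).
  { apply sumR_le; intros i; pose proof (pow2_ge_0 (a i + b i)); nra. }
  rewrite sumR_plus, !sumR_scal in Hsum; lra.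
Qed.

(* Completing the square coordinatewise: the minimum over w is at w = -(c/e) a. *)
Lemma completed_square_ge m e c a w : 0 < e ->
  e / 2 * sqnorm m w + c * dot m a w >= - (c ^ 2 / (2 * e)) * sqnorm m a.
Proof.
  intros He; unfold sqnorm, dot.
  rewrite <- !sumR_scal, <- sumR_plus; apply Rle_ge, sumR_le; intros i.
  assert (0 <= e / 2 * (w i + c / e * a i) ^ 2) by (apply Rmult_le_pos; [lra | apply pow2_ge_0]).
  assert (e / 2 * (w i + c / e * a i) ^ 2 =
          e / 2 * (w i * w i) + c * (a i * w i) + c ^ 2 / (2 * e) * (a i * a i)) by (field; lra).
  lra.
Qed.

Lemma moreau_obj_ge_affine m (g : (nat -> R) -> R) e c a b : 0 < e ->
  (forall y, g y >= c * dot m a y + b) ->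
  forall y z, g y + e / 2 * sqnorm m (fun i => y i - z i)
              >= c * dot m a z + b - c ^ 2 / (2 * e) * sqnorm m a.
Proof.
  intros He Hg y z.
  pose proof (Hg y); pose proof (completed_square_ge m e c a (fun i => y i - z i) He).
  rewrite dot_sub in *; lra.
Qed.

Lemma maxR_from1_le n g M :
  (forall r, (1 <= r <= n + 1)%nat -> g r <= M) -> maxR_from1 n g <= M.
Proof.
  induction n as [|n IH]; intros Hg; simpl.
  - apply Hg; lia.
  - apply Rmax_lub; [apply IH; intros; apply Hg | apply Hg]; lia.
Qed.

Lemma maxR_from1_ge_last n g : g (n + 1)%nat <= maxR_from1 n g.
Proof.
  induction n as [|n IH]; simpl; [lra|].
  eapply Rle_trans; [| apply Rmax_r]; replace (S (n + 1)) with (S (S n)) by lia; lra.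
Qed.

Lemma Rinf_is_glb E :
  (exists s, E s) -> (exists b, forall s, E s -> b <= s) -> is_glb E (Rinf E).
Proof.
  intros [s Hs] [b Hb]; unfold Rinf; apply epsilon_spec.
  destruct (completeness (fun x => E (- x))) as [M [HM1 HM2]].
  - exists (- b); intros x Hx; specialize (Hb _ Hx); lra.
  - exists (- s); now rewrite Ropp_involutive.
  - exists (- M); split.
    + intros t Ht.
      assert (Ht' : E (- - t)) by now rewrite Ropp_involutive.
      specialize (HM1 _ Ht'); lra.
    + intros c Hc.
      assert (M <= - c) by (apply HM2; intros x Hx; specialize (Hc _ Hx); lra).
      lra.
Qed.

Lemma Rinf_le E s b : E s -> (forall t, E t -> b <= t) -> Rinf E <= s.
Proof.
  intros Hs Hb; apply (proj1 (Rinf_is_glb E (ex_intro _ s Hs) (ex_intro _ b Hb))), Hs.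
Qed.

Lemma le_Rinf E b : (exists s, E s) -> (forall t, E t -> b <= t) -> b <= Rinf E.
Proof.
  intros Hs Hb; apply (proj2 (Rinf_is_glb E Hs (ex_intro _ b Hb))), Hb.
Qed.

Lemma pow15_eq x : 0 < x -> pow15 x = x * sqrt x.
Proof.
  intros Hx; unfold pow15; replace (3 / 2) with (1 + / 2) by field.
  rewrite Rpower_plus, Rpower_1, Rpower_sqrt by lra; reflexivity.
Qed.

Definition vsum (D : nat) (v : nat -> nat -> R) : nat -> R :=
  fun i => sumR (D + 1) (fun k => v (S k) i).

Lemma dot_vsum m D v r : orthonormal m D v -> (1 <= r <= D + 1)%nat ->
  dot m (v r) (vsum D v) = 1.
Proof.
  intros hv Hr; unfold dot, vsum.
  rewrite (sumR_ext m _ (fun i => sumR (D + 1) (fun k => v r i * v (S k) i)))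
    by (intros; now rewrite sumR_scal).
  rewrite sumR_swap, (sumR_ext (D + 1) _ (fun k => if Nat.eq_dec r (S k) then 1 else 0)).
  - apply sumR_delta; lia.
  - intros k Hk; apply hv; lia.
Qed.

Lemma sqnorm_vsum m D v : orthonormal m D v -> sqnorm m (vsum D v) = INR (D + 1).
Proof.
  intros hv; unfold sqnorm, dot at 1.
  rewrite (sumR_ext m _ (fun i => sumR (D + 1) (fun k => vsum D v i * v (S k) i)))
    by (intros; rewrite sumR_scal; reflexivity).
  rewrite sumR_swap, <- sumR_const1; apply sumR_ext; intros k Hk.
  fold (dot m (vsum D v) (v (S k))); rewrite dot_sym; apply dot_vsum; [exact hv | lia].
Qed.

Section HardInstance.

Variables (m D : nat) (L : R) (H : option R) (v : nat -> nat -> R).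
Hypotheses (hL : 0 < L) (hH : forall h, H = Some h -> 0 < h) (hv : orthonormal m D v).

Local Notation l := (ell L H D).
Local Notation e := (eta L H D).
Local Notation n := (INR (D + 1)).

Lemma INR_D1_pos : 0 < n.
Proof. apply lt_0_INR; lia. Qed.

Lemma ell_pos : 0 < l.
Proof.
  pose proof INR_D1_pos as Hn; pose proof (sqrt_lt_R0 _ Hn).
  unfold ell; destruct H as [h|]; [| lra].
  specialize (hH h eq_refl); rewrite pow15_eq by lra.
  apply Rmin_glb_lt; [lra |]; apply Rdiv_lt_0_compat; [lra | nra].
Qed.

Lemma eta_eq : e = 10 * (n * sqrt n) * l.
Proof. unfold eta; rewrite pow15_eq by apply INR_D1_pos; reflexivity. Qed.

Lemma eta_pos : 0 < e.
Proof.
  pose proof INR_D1_pos as Hn; pose proof (sqrt_lt_R0 _ Hn); pose proof ell_pos.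
  rewrite eta_eq; apply Rmult_lt_0_compat; [nra | lra].
Qed.

Lemma ell_div_sqrt : l / sqrt n = 10 * n * (l ^ 2 / e).
Proof.
  pose proof INR_D1_pos as Hn; pose proof (sqrt_lt_R0 _ Hn); pose proof ell_pos.
  rewrite eta_eq; field; split; lra.
Qed.

Lemma lower_bound_le_ell : lower_bound L H D <= l / sqrt n / 2.
Proof.
  pose proof INR_D1_pos as Hn; pose proof (sqrt_lt_R0 _ Hn) as Hs.
  pose proof (sqrt_sqrt _ (Rlt_le _ _ Hn)) as Hss.
  unfold lower_bound, ell; destruct H as [h|].
  - rewrite pow15_eq by lra; unfold Rmin at 2.
    destruct (Rle_dec L (h / (10 * (n * sqrt n)))) as [_ | _].
    + eapply Rle_trans; [apply Rmin_l | right; field; lra].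
    + eapply Rle_trans; [apply Rmin_r | right].
      replace (n ^ 2) with (n * (sqrt n * sqrt n)) by (rewrite Hss; ring); field; lra.
  - right; field; lra.
Qed.

Lemma ftilde_ge_last y :
  ftilde m D L H v y >= l * dot m (v (D + 1)%nat) y + - (5 * INR D * (l ^ 2 / e)).
Proof.
  unfold ftilde.
  pose proof (maxR_from1_ge_last D (fun r => l * dot m (v r) y - 5 * l ^ 2 * INR (r - 1) / e)) as Hlast.
  cbv beta in Hlast; replace (D + 1 - 1)%nat with D in Hlast by lia.
  replace (5 * INR D * (l ^ 2 / e)) with (5 * l ^ 2 * INR D / e) by (unfold Rdiv; ring).
  lra.
Qed.

Lemma sqnorm_v_last : sqnorm m (v (D + 1)%nat) = 1.
Proof.
  unfold sqnorm; rewrite hv by lia; destruct (Nat.eq_dec _ _); [reflexivity | lia].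
Qed.

Lemma moreau_obj_ge y z :
  ftilde m D L H v y + e / 2 * sqnorm m (fun i => y i - z i)
  >= l * dot m (v (D + 1)%nat) z - (5 * INR D + / 2) * (l ^ 2 / e).
Proof.
  pose proof eta_pos.
  pose proof (moreau_obj_ge_affine m _ e l (v (D + 1)%nat) _ eta_pos ftilde_ge_last y z).
  rewrite sqnorm_v_last in *.
  replace (l ^ 2 / (2 * e)) with (/ 2 * (l ^ 2 / e)) in * by (field; lra); lra.
Qed.

Lemma fenv_ge z :
  fenv m D L H v z >= l * dot m (v (D + 1)%nat) z - (5 * INR D + / 2) * (l ^ 2 / e).
Proof.
  apply Rle_ge, le_Rinf; [eexists; now exists z |].
  intros t [y ->]; apply Rge_le, moreau_obj_ge.
Qed.

Lemma fenv_le_ftilde z : fenv m D L H v z <= ftilde m D L H v z.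
Proof.
  unfold fenv; eapply Rle_trans.
  - apply (Rinf_le _ _ (l * dot m (v (D + 1)%nat) z - (5 * INR D + / 2) * (l ^ 2 / e))).
    + now exists z.
    + intros t [y ->]; apply Rge_le, moreau_obj_ge.
  - unfold sqnorm, dot; rewrite (sumR_ext m _ (fun i => 0 * 0)) by (intros; ring).
    rewrite (sumR_scal m 0 (fun _ => 0)); lra.
Qed.

Lemma ftilde_le_of_dot_const y c :
  (forall r, (1 <= r <= D + 1)%nat -> dot m (v r) y = c) -> ftilde m D L H v y <= l * c.
Proof.
  intros Hy; pose proof eta_pos; pose proof ell_pos.
  unfold ftilde; apply maxR_from1_le; intros r Hr; rewrite Hy by exact Hr.
  assert (0 <= 5 * l ^ 2 * INR (r - 1) / e).
  { apply Rmult_le_pos; [apply Rmult_le_pos; [nra | apply pos_INR] |].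
    left; apply Rinv_0_lt_compat; lra. }
  lra.
Qed.

Lemma fmin_ball_le_fenv x' : norm m x' <= 1 -> fmin_ball m D L H v <= fenv m D L H v x'.
Proof.
  intros Hx'; apply (Rinf_le _ _ (- l - (5 * INR D + / 2) * (l ^ 2 / e))); [now exists x' |].
  intros t [y [Hy ->]]; pose proof ell_pos.
  pose proof (dot_ge_neg_sqnorm m (v (D + 1)%nat) y) as Hdot.
  rewrite sqnorm_v_last in Hdot; pose proof (sqnorm_le_1 _ _ Hy).
  pose proof (fenv_ge y); nra.
Qed.

Lemma fmin_ball_le : fmin_ball m D L H v <= - (l / sqrt n).
Proof.
  pose proof INR_D1_pos as Hn; pose proof (sqrt_lt_R0 _ Hn) as Hs.
  set (x0 := fun i => - / sqrt n * vsum D v i).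
  assert (Hx0 : norm m x0 <= 1).
  { apply norm_le_1; unfold x0; rewrite sqnorm_scal, sqnorm_vsum by exact hv.
    replace ((- / sqrt n) ^ 2) with (/ (sqrt n * sqrt n)) by (field; lra).
    rewrite sqrt_sqrt by lra; right; field; lra. }
  eapply Rle_trans; [apply fmin_ball_le_fenv, Hx0 |].
  eapply Rle_trans; [apply fenv_le_ftilde |].
  eapply Rle_trans; [apply (ftilde_le_of_dot_const _ (- / sqrt n)) | right; field; lra].
  intros r Hr; unfold x0; rewrite dot_scal, dot_vsum by assumption; ring.
Qed.

End HardInstance.

Theorem lemma5 (m D : nat) (L : R) (H : option R) (v : nat -> nat -> R)
  (hL : 0 < L) (hH : forall h, H = Some h -> 0 < h) (hD : (1 <= D)%nat)
  (hv : orthonormal m D v) :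
  forall x : nat -> R,
    Rabs (dot m (v (D + 1)%nat) x) <= ell L H D / eta L H D ->
    fenv m D L H v x - fmin_ball m D L H v >= lower_bound L H D.
Proof.
  intros x Hx.
  pose proof (ell_pos D L H hL hH) as Hl; pose proof (eta_pos D L H hL hH) as He.
  assert (Hslab : ell L H D * dot m (v (D + 1)%nat) x >= - (ell L H D ^ 2 / eta L H D)).
  { pose proof (Rle_abs (- dot m (v (D + 1)%nat) x)) as Habs; rewrite Rabs_Ropp in Habs.
    replace (ell L H D ^ 2 / eta L H D) with (ell L H D * (ell L H D / eta L H D)) by (field; lra).
    nra. }
  pose proof (fenv_ge m D L H v hL hH hv x) as Hfx.
  pose proof (fmin_ball_le m D L H v hL hH hv) as Hmin.
  pose proof (lower_bound_le_ell D L H hH) as Hlb.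
  rewrite (ell_div_sqrt D L H hL hH) in Hmin, Hlb.
  assert (0 <= ell L H D ^ 2 / eta L H D) by (apply Rlt_le, Rdiv_lt_0_compat; nra).
  rewrite plus_INR in *; simpl INR in *; lra.
Qed.
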